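(* For $\alpha>0$ and $t\in\mathbb{R}$, let $A(\alpha)=\begin{pmatrix}-1&\alpha\\0&-1\end{pmatrix}$ and $B=\begin{pmatrix}t\\1\end{pmatrix}$, and let $X$ solve $A(\alpha)X+XA(\alpha)^*=-BB^*$, with singular values $s_1\ge s_2>0$. Then $X=\frac14\begin{pmatrix}2t^2+2\alpha t+\alpha^2 & \alpha+2t\\ \alpha+2t & 2\end{pmatrix}$, and $$\max_{t\in\mathbb{R}}\frac{s_2}{s_1}=\begin{cases}\alpha^2/4, & 0<\alpha\le 2,\\ 4/\alpha^2, & \alpha\ge 2,\end{cases}$$ with the maximum attained at $t=-\alpha/2$. *)

From HB Require Import structures.
From mathcomp Require Import all_boot all_order all_algebra.
Set Implicit Arguments. Unset Strict Implicit. Unset Printing Implicit Defensive.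
Import Order.TTheory GRing.Theory Num.Theory.
Local Open Scope ring_scope.

Section Defs.
Variable R : rcfType.

Definition Amat (a : R) : 'M[R]_2 :=
  \matrix_(i < 2, j < 2)
    (if i == j then -1
     else if (val i == 0%N) && (val j == 1%N) then a else 0).

Definition Bvec (t : R) : 'cV[R]_2 :=
  \col_(i < 2) (if val i == 0%N then t else 1).

(* Continuous Lyapunov equation  A X + X A^* = - B B^*  (real case: ^* = ^T) *)
Definition lyap (A : 'M[R]_2) (B : 'cV[R]_2) (X : 'M[R]_2) : Prop :=
  A *m X + X *m A^T = - (B *m B^T).

Definition Xform (a t : R) : 'M[R]_2 :=
  \matrix_(i < 2, j < 2)
    ((4%:R)^-1 *
     (if (val i == 0%N) && (val j == 0%N) then 2%:R * t ^+ 2 + 2%:R * a * t + a ^+ 2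
      else if (val i == 1%N) && (val j == 1%N) then 2%:R
      else a + 2%:R * t)).

(* s1 >= s2 >= 0 are the singular values of X : their squares are the
   eigenvalues (with multiplicity) of X^* X, i.e. the roots of its
   characteristic polynomial. *)
Definition singvals2 (X : 'M[R]_2) (s1 s2 : R) : Prop :=
  [/\ 0 <= s2, s2 <= s1 &
      char_poly (X^T *m X) = ('X - (s1 ^+ 2)%:P) * ('X - (s2 ^+ 2)%:P)].

Definition maxratio (a : R) : R :=
  if a <= 2%:R then a ^+ 2 / 4%:R else 4%:R / a ^+ 2.

End Defs.

(* X is symmetric with det X = alpha^2/16 and
   tr X = (alpha^2 + 4)/8 + (t + alpha/2)^2/2, both nonnegative, so X is
   positive semidefinite and its singular values are its eigenvalues, the
   roots of x^2 - (tr X) x + det X.  For a fixed product p q, the ratio of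
   the two roots increases as their sum decreases towards p + q; the sum is
   minimal at t = -alpha/2, where the roots are 1/2 and alpha^2/8, whence the
   two regimes alpha <= 2 and alpha >= 2. *)

From HB Require Import structures.
From mathcomp Require Import all_boot all_order all_algebra.
From mathcomp Require Import ring lra.
Set Implicit Arguments. Unset Strict Implicit. Unset Printing Implicit Defensive.
Import Order.TTheory GRing.Theory Num.Theory.
Local Open Scope ring_scope.

Section TwoByTwo.
Variable R : comNzRingType.
Implicit Types A : 'M[R]_2.

Lemma ord2_ind (P : 'I_2 -> Prop) : P 0 -> P 1 -> forall i, P i.
Proof.
move=> P0 P1 [[|[|k]] lt_i2] //.
- by have -> : Ordinal lt_i2 = 0 by apply/val_inj.
- by have -> : Ordinal lt_i2 = 1 by apply/val_inj.
Qed.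

Lemma sum_ord2 (F : 'I_2 -> R) : \sum_(i < 2) F i = F 0 + F 1.
Proof. rewrite big_ord_recl big_ord1; congr (F _ + F _). exact: val_inj. Qed.

Lemma mulmx2E A (B : 'M[R]_2) i j : (A *m B) i j = A i 0 * B 0 j + A i 1 * B 1 j.
Proof. by rewrite mxE sum_ord2. Qed.

Lemma trace_mx2 A : \tr A = A 0 0 + A 1 1.
Proof. by rewrite /mxtrace sum_ord2. Qed.

Lemma det_mx2 A : \det A = A 0 0 * A 1 1 - A 0 1 * A 1 0.
Proof.
rewrite (expand_det_row _ 0) sum_ord2 /cofactor !det_mx11 !mxE /=.
have -> : lift 0 (0 : 'I_1) = 1 :> 'I_2 by exact: val_inj.
have -> : lift 1 (0 : 'I_1) = 0 :> 'I_2 by exact: val_inj.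
by rewrite addn0 modn_small // expr0 expr1 mul1r mulN1r mulrN.
Qed.

Lemma trace_mx2_sqr A : \tr (A *m A) = \tr A ^+ 2 - 2%:R * \det A.
Proof. rewrite !trace_mx2 det_mx2 !mulmx2E; ring. Qed.

Lemma char_poly_mx2 A : char_poly A = 'X^2 - (\tr A)%:P * 'X + (\det A)%:P.
Proof.
apply/polyP => i; rewrite coefD coefB coefXn coefCM coefX coefC.
case: i => [|[|[|i]]] /=; rewrite ?(mulr0, mulr1, subr0, sub0r, oppr0, add0r, addr0).
- by rewrite char_poly_det expr2 mulrNN !mul1r.
- exact: char_poly_trace.
- have /monicP := char_poly_monic A.
  by rewrite /lead_coef size_char_poly.
- by rewrite nth_default ?size_char_poly.
Qed.

Lemma mul_linear_factors (x y : R) :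
  ('X - x%:P) * ('X - y%:P) = 'X^2 - (x + y)%:P * 'X + (x * y)%:P.
Proof. rewrite polyCD polyCM; ring. Qed.

Lemma monic_quadratic_inj (b c b' c' : R) :
  'X^2 - b%:P * 'X + c%:P = 'X^2 - b'%:P * 'X + c'%:P -> b = b' /\ c = c'.
Proof.
move=> eq_pq; have coef_eq i := congr1 (fun p : {poly R} => p`_i) eq_pq.
move: (coef_eq 0%N) (coef_eq 1%N).
rewrite /= !(coefD, coefN, coefXn, coefCM, coefX, coefC) /=.
by rewrite !(mulr0, mulr1, oppr0, add0r, addr0) => -> /oppr_inj ->.
Qed.

Lemma char_poly_sym_mx2_gram A : A^T = A ->
  char_poly (A^T *m A) = 'X^2 - (\tr A ^+ 2 - 2%:R * \det A)%:P * 'X + (\det A ^+ 2)%:P.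
Proof. by move=> symA; rewrite symA char_poly_mx2 trace_mx2_sqr det_mulmx expr2. Qed.

End TwoByTwo.

Section SymmetricSingularValues.
Variable R : rcfType.
Implicit Types A : 'M[R]_2.

Lemma sym_mx2_discr_ge0 A : A^T = A -> 4%:R * \det A <= \tr A ^+ 2.
Proof.
move=> /matrixP /(_ 0 1); rewrite mxE => symA.
rewrite trace_mx2 det_mx2 symA -subr_ge0.
have -> : (A 0 0 + A 1 1) ^+ 2 - 4%:R * (A 0 0 * A 1 1 - A 0 1 * A 0 1)
        = (A 0 0 - A 1 1) ^+ 2 + 4%:R * A 0 1 ^+ 2 by ring.
by rewrite addr_ge0 ?sqr_ge0 // mulr_ge0 ?sqr_ge0.
Qed.

Lemma singvals2_symE A s1 s2 : A^T = A -> 0 <= \det A -> 0 <= \tr A ->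
  singvals2 A s1 s2 <-> [/\ 0 <= s2, s2 <= s1, s1 * s2 = \det A & s1 + s2 = \tr A].
Proof.
move=> symA det_ge0 tr_ge0; rewrite /singvals2 char_poly_sym_mx2_gram //.
rewrite mul_linear_factors; split=> -[s2_ge0 s2_le_s1].
- move=> /monic_quadratic_inj [sum_sqr prod_sqr].
  have s1_ge0 : 0 <= s1 := le_trans s2_ge0 s2_le_s1.
  have prod_eq : s1 * s2 = \det A.
    by apply/eqP; rewrite -(@eqrXn2 _ 2) ?mulr_ge0 // exprMn prod_sqr.
  split=> //; apply/eqP; rewrite -(@eqrXn2 _ 2) ?addr_ge0 //.
  by apply/eqP; nra.
- move=> prod_eq sum_eq; split=> //.
  by rewrite -exprMn prod_eq -sum_eq -prod_eq; congr (_ - _%:P * _ + _); ring.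
Qed.

Lemma nonneg_roots_of_sum_prod (S P : R) : 0 <= S -> 0 <= P -> 4%:R * P <= S ^+ 2 ->
  exists s1 s2, [/\ 0 <= s2, s2 <= s1, s1 * s2 = P & s1 + s2 = S].
Proof.
move=> S_ge0 P_ge0 discr_ge0.
set q := Num.sqrt (S ^+ 2 - 4%:R * P).
have q_ge0 : 0 <= q by rewrite sqrtr_ge0.
have q_sqr : q ^+ 2 = S ^+ 2 - 4%:R * P by rewrite sqr_sqrtr ?subr_ge0.
have q_le_S : q <= S by nra.
exists ((S + q) / 2%:R), ((S - q) / 2%:R); split; nra.
Qed.

End SymmetricSingularValues.

Section RatioBounds.
Variable R : realFieldType.

Lemma ratio_le_of_sum_ge (p q s1 s2 : R) : 0 < q -> q <= p ->
  0 <= s2 -> s2 <= s1 -> s1 * s2 = p * q -> p + q <= s1 + s2 -> s2 / s1 <= q / p.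
Proof.
move=> q_gt0 q_le_p s2_ge0 s2_le_s1 prod_eq sum_ge.
have s1_gt0 : 0 < s1 by nra.
(* (s1 - p)(s1 - q) = s1 (s1 + s2 - p - q) >= 0, so s1 lies outside ]q, p[ *)
have p_le_s1 : p <= s1 by nra.
rewrite ler_pdivrMr // mulrAC ler_pdivlMr; nra.
Qed.

Lemma ratio_eq_of_sum_eq (p q s1 s2 : R) : q <= p ->
  s2 <= s1 -> s1 * s2 = p * q -> s1 + s2 = p + q -> s2 / s1 = q / p.
Proof.
move=> q_le_p s2_le_s1 prod_eq sum_eq.
have s1_eq : s1 = p by nra.
have s2_eq : s2 = q by nra.
by rewrite s1_eq s2_eq.
Qed.

End RatioBounds.

Section MaxRatio.
Variable R : rcfType.

Lemma maxratio_as_ratio (a : R) : 0 < a -> exists p q, [/\ 0 < q, q <= p,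
  p * q = a ^+ 2 / 16%:R, p + q = (a ^+ 2 + 4%:R) / 8%:R & maxratio a = q / p].
Proof.
move=> a_gt0; rewrite /maxratio; case: leP => [a_le2 | a_gt2].
- by exists 2%:R^-1, (a ^+ 2 / 8%:R); split; [nra | nra | field ..].
- have a_neq0 : a != 0 by rewrite gt_eqF.
  by exists (a ^+ 2 / 8%:R), 2%:R^-1; split; [lra | nra | field ..].
Qed.

Lemma ratio_le_maxratio (a s1 s2 : R) : 0 < a -> 0 <= s2 -> s2 <= s1 ->
  s1 * s2 = a ^+ 2 / 16%:R -> (a ^+ 2 + 4%:R) / 8%:R <= s1 + s2 ->
  s2 / s1 <= maxratio a.
Proof.
move=> /maxratio_as_ratio [p [q [q_gt0 q_le_p pq_eq sum_eq ->]]] s2_ge0 s2_le_s1.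
by rewrite -pq_eq -sum_eq; apply: ratio_le_of_sum_ge.
Qed.

Lemma ratio_eq_maxratio (a s1 s2 : R) : 0 < a -> 0 <= s2 -> s2 <= s1 ->
  s1 * s2 = a ^+ 2 / 16%:R -> s1 + s2 = (a ^+ 2 + 4%:R) / 8%:R ->
  s2 / s1 = maxratio a.
Proof.
move=> /maxratio_as_ratio [p [q [_ q_le_p pq_eq sum_eq ->]]] _ s2_le_s1.
by rewrite -pq_eq -sum_eq; apply: ratio_eq_of_sum_eq.
Qed.

End MaxRatio.

Section LyapunovSolution.
Variable R : rcfType.

Lemma lyap_entries (a t : R) (X : 'M[R]_2) : lyap (Amat a) (Bvec t) X ->
  [/\ -2%:R * X 0 0 + a * (X 1 0 + X 0 1) = - t ^+ 2,
      -2%:R * X 0 1 + a * X 1 1 = - t,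
      -2%:R * X 1 0 + a * X 1 1 = - t &
      -2%:R * X 1 1 = -1].
Proof.
move=> /matrixP lyapX.
move: (lyapX 0 0) (lyapX 0 1) (lyapX 1 0) (lyapX 1 1).
rewrite !(mxE, sum_ord2, big_ord1) /=.
split; lra.
Qed.

Lemma lyap_eq_Xform (a t : R) (X : 'M[R]_2) :
  lyap (Amat a) (Bvec t) X -> X = Xform a t.
Proof.
move=> /lyap_entries [eq00 eq01 eq10 eq11].
have x11 : X 1 1 = 2%:R^-1 by lra.
rewrite x11 in eq01 eq10.
have x01 : X 0 1 = 4%:R^-1 * (a + 2%:R * t) by lra.
have x10 : X 1 0 = 4%:R^-1 * (a + 2%:R * t) by lra.
rewrite x01 x10 in eq00.
apply/matrixP; apply: ord2_ind; apply: ord2_ind; rewrite mxE /= ?x01 ?x10 ?x11 //.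
all: lra.
Qed.

Lemma Xform_lyap (a t : R) : lyap (Amat a) (Bvec t) (Xform a t).
Proof.
apply/matrixP; apply: ord2_ind; apply: ord2_ind.
all: by rewrite !(mxE, sum_ord2, big_ord1) /=; field.
Qed.

Lemma Xform_sym (a t : R) : (Xform a t)^T = Xform a t.
Proof. by apply/matrixP; apply: ord2_ind; apply: ord2_ind; rewrite !mxE. Qed.

Lemma det_Xform (a t : R) : \det (Xform a t) = a ^+ 2 / 16%:R.
Proof. by rewrite det_mx2 !mxE /=; field. Qed.

Lemma trace_Xform (a t : R) :
  \tr (Xform a t) = (a ^+ 2 + 4%:R) / 8%:R + (t + a / 2%:R) ^+ 2 / 2%:R.
Proof. by rewrite trace_mx2 !mxE /=; field. Qed.

Lemma singvals2_XformE (a t s1 s2 : R) : singvals2 (Xform a t) s1 s2 <->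
  [/\ 0 <= s2, s2 <= s1, s1 * s2 = a ^+ 2 / 16%:R &
      s1 + s2 = (a ^+ 2 + 4%:R) / 8%:R + (t + a / 2%:R) ^+ 2 / 2%:R].
Proof.
rewrite -(det_Xform a t) -(trace_Xform a t); apply: singvals2_symE; first exact: Xform_sym.
  by rewrite det_Xform divr_ge0 ?sqr_ge0.
by rewrite trace_Xform addr_ge0 // divr_ge0 ?addr_ge0 ?sqr_ge0.
Qed.

Lemma exists_singvals2_Xform (a t : R) : exists s1 s2, singvals2 (Xform a t) s1 s2.
Proof.
have [|||s1 [s2 sv]] := @nonneg_roots_of_sum_prod R (\tr (Xform a t)) (\det (Xform a t)).
- by rewrite trace_Xform addr_ge0 // divr_ge0 ?addr_ge0 ?sqr_ge0.
- by rewrite det_Xform divr_ge0 ?sqr_ge0.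
- exact/sym_mx2_discr_ge0/Xform_sym.
by exists s1, s2; apply/singvals2_XformE; rewrite -(det_Xform a t) -(trace_Xform a t).
Qed.

End LyapunovSolution.

Theorem mainTheorem5 (R : rcfType) (alpha : R) (halpha : 0 < alpha) :
  (forall (t : R), exists (X : 'M[R]_2) (s1 s2 : R),
      lyap (Amat alpha) (Bvec t) X /\ singvals2 X s1 s2) /\
  (forall (t : R) (X : 'M[R]_2),
      lyap (Amat alpha) (Bvec t) X -> X = Xform alpha t) /\
  (forall (t : R) (X : 'M[R]_2) (s1 s2 : R),
      lyap (Amat alpha) (Bvec t) X -> singvals2 X s1 s2 ->
      s2 / s1 <= maxratio alpha) /\
  (forall (X : 'M[R]_2) (s1 s2 : R),
      lyap (Amat alpha) (Bvec (- (alpha / 2%:R))) X -> singvals2 X s1 s2 ->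
      s2 / s1 = maxratio alpha).
Proof.
split; [|split; [exact: lyap_eq_Xform | split]].
- move=> t; have [s1 [s2 sv]] := exists_singvals2_Xform alpha t.
  by exists (Xform alpha t), s1, s2; split; first exact: Xform_lyap.
- move=> t X s1 s2 /lyap_eq_Xform -> /singvals2_XformE [s2_ge0 s2_le_s1 prod_eq sum_eq].
  apply: ratio_le_maxratio => //; rewrite sum_eq lerDl.
  by rewrite divr_ge0 ?sqr_ge0.
- move=> X s1 s2 /lyap_eq_Xform -> /singvals2_XformE [s2_ge0 s2_le_s1 prod_eq sum_eq].
  by apply: ratio_eq_maxratio => //; rewrite sum_eq addNr expr0n mul0r addr0.
Qed.
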